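(* Let $(S,\ast)$ be an adequate commutative partial semigroup and let $A$ be a $J_\delta$-set in $S$. Let $F\in\mathcal{P}_f(\mathcal{T}_S)$ and let $\langle H_n\rangle_{n=1}^\infty$ be a sequence in $\mathcal{P}_f(\mathbb{N})$ such that $\max H_n<\min H_{n+1}$ for each $n$. Then for every $W\in\mathcal{P}_f(S)$ there exist $a\in\sigma_S(W)$ and $G\in\mathcal{P}_f(\mathbb{N})$ such that for all $f\in F$, $\prod_{k\in G}\prod_{t\in H_k}f(t)\in\sigma_S(W\ast a)$ and $a\ast\prod_{k\in G}\prod_{t\in H_k}f(t)\in A$.
   Context: A partial semigroup is a pair $(S,\ast)$ where $\ast$ is an operation defined on a subset of $S\times S$ such that for all $x,y,z\in S$, $(x\ast y)\ast z=x\ast(y\ast z)$ in the sense that if either side is defined, so is the other and they are equal; it is commutative if $x\ast y=y\ast x$ whenever defined. For $s\in S$, $\phi_S(s)=\{t\in S: s\ast t\text{ is defined}\}$; for $H\in\mathcal{P}_f(S)$ (finite nonempty subsets), $\sigma_S(H)=\bigcap_{s\in H}\phi_S(s)$. $(S,\ast)$ is adequate if $\sigma_S(H)\ne\emptyset$ for all $H\in\mathcal{P}_f(S)$. A sequence $\langle y_n\rangle$ in $S$ is adequate if $\prod_{n\in F}y_n$ is defined for every $F\in\mathcal{P}_f(\mathbb{N})$ and for every $K\in\mathcal{P}_f(S)$ there is $m$ with $\prod_{n\in F}y_n\in\sigma_S(K)$ for all $F\in\mathcal{P}_f(\mathbb{N})$ with $\min F\ge m$. $\mathcal{T}_S$ is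 the set of all adequate sequences in $S$. For $W\in\mathcal{P}_f(S)$ and $a\in S$, $W\ast a=\{w\ast a: w\in W,\ w\ast a\text{ defined}\}$. A set $A\subseteq S$ is a $J_\delta$-set if for every $F\in\mathcal{P}_f(\mathcal{T}_S)$ and $W\in\mathcal{P}_f(S)$ there exist $a\in\sigma_S(W)$ and $H\in\mathcal{P}_f(\mathbb{N})$ such that for each $f\in F$, $\prod_{t\in H}f(t)\in\sigma_S(W\ast a)$ and $a\ast\prod_{t\in H}f(t)\in A$. *)

From mathcomp Require Import all_boot finmap.
From Stdlib Require List.
Set Implicit Arguments. Unset Strict Implicit. Unset Printing Implicit Defensive.
Local Open Scope fset_scope.

Section PartialSemigroup.
Variable S : Type.
(* A partial operation on S: [op x y = None] means "x * y is undefined". *)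
Variable op : S -> S -> option S.

(* (x*y)*z = x*(y*z) in the strong sense: either side defined iff the other is, and equal. *)
Definition psg_assoc : Prop :=
  forall x y z : S,
    obind (fun xy => op xy z) (op x y) = obind (fun yz => op x yz) (op y z).

Definition psg_comm : Prop := forall x y : S, op x y = op y x.

Definition defined (o : option S) : Prop := exists u, o = Some u.

Definition phi (s t : S) : Prop := defined (op s t).

(* sigma_S(H) for a finite set H of S, represented by a list *)
Definition sigma (H : seq S) (t : S) : Prop := forall s, List.In s H -> phi s t.

Definition adequate : Prop :=
  forall H : seq S, H <> [::] -> exists t, sigma H t.

Definition oop (a b : option S) : option S :=
  match a, b with Some x, Some y => op x y | _, _ => None end.

(* product x_1 * x_2 * ... * x_n of a nonempty list (None if empty or undefined) *)
Fixpoint plist (l : seq (option S)) : option S :=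
  match l with
  | [::] => None
  | [:: x] => x
  | x :: l' => oop x (plist l')
  end.

Definition prodF (F : {fset nat}) (g : nat -> option S) : option S :=
  plist [seq g i | i <- sort leq (enum_fset F)].

Definition adequate_seq (y : nat -> S) : Prop :=
  (forall F : {fset nat}, F != fset0 -> defined (prodF F (fun n => Some (y n)))) /\
  (forall K : seq S, K <> [::] ->
     exists m : nat, forall F : {fset nat}, F != fset0 ->
       (forall n, n \in F -> m <= n) ->
       exists p, prodF F (fun n => Some (y n)) = Some p /\ sigma K p).

Definition opr (W : seq S) (a : S) : seq S := pmap (fun w => op w a) W.

Definition Jdelta (A : S -> Prop) : Prop :=
  forall F : seq (nat -> S), F <> [::] -> (forall f, List.In f F -> adequate_seq f) ->
  forall W : seq S, W <> [::] ->
  exists a, sigma W a /\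
  exists H : {fset nat}, H != fset0 /\
    forall f, List.In f F ->
      exists p q, prodF H (fun t => Some (f t)) = Some p /\
        sigma (opr W a) p /\ op a p = Some q /\ A q.

End PartialSemigroup.

From mathcomp Require Import all_boot finmap.
From Stdlib Require List.
Set Implicit Arguments. Unset Strict Implicit. Unset Printing Implicit Defensive.
Local Open Scope fset_scope.

(** Grouping the factors of an adequate sequence [f] along the blocks [H_k]
   gives the sequence [g k = prod_{t in H_k} f t].  Since the blocks are
   nonempty and increasing, [prod_{k in G} g k] is, by associativity, the
   product of [f] over the union of the blocks [H_k] ([k] in [G]), and
   [min H_k >= k] bounds the least element of that union below by [min G].
   Hence [g] is again adequate, and the J_delta property of [A] applied to
   the sequences [g] gives the theorem. *)

Section PartialProducts.
Variables (S : Type) (op : S -> S -> option S).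
Hypothesis opA : psg_assoc op.

Lemma oopA : associative (oop op).
Proof.
case=> [x|] [y|] [z|] //=; try by case: (op x y).
by have := opA x y z; case: (op x y) => [xy|]; case: (op y z) => [yz|].
Qed.

Lemma plist_cons x l : l <> [::] -> plist op (x :: l) = oop op x (plist op l).
Proof. by case: l. Qed.

Lemma plist_cat l1 l2 : l1 <> [::] -> l2 <> [::] ->
  plist op (l1 ++ l2) = oop op (plist op l1) (plist op l2).
Proof.
elim: l1 => [//|x l1 IHl1] _ l2_neq0.
case: l1 IHl1 => [|y l1] IHl1; first by clear IHl1; case: l2 l2_neq0.
by rewrite cat_cons plist_cons // IHl1 // (@plist_cons x (y :: l1)) // oopA.
Qed.

Lemma plist_flatten (ls : seq (seq (option S))) :
  all (fun l => 0 < size l) ls ->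
  plist op (flatten ls) = plist op (map (plist op) ls).
Proof.
elim: ls => [//|l ls IHls] /= /andP[l_gt0 ls_gt0].
case: ls IHls ls_gt0 => [|l' ls] IHls ls_gt0; first by rewrite cats0.
have flatten_neq0 : flatten (l' :: ls) <> [::].
  by move/(congr1 size); rewrite /= size_cat; case/andP: ls_gt0; case: size.
by rewrite plist_cat ?IHls //; case: l l_gt0.
Qed.

End PartialProducts.

Definition fenum (A : {fset nat}) : seq nat := sort leq (enum_fset A).

Lemma mem_fenum (A : {fset nat}) : fenum A =i A.
Proof. by move=> x; rewrite mem_sort. Qed.

Lemma fenum_sorted (A : {fset nat}) : sorted ltn (fenum A).
Proof.
by rewrite ltn_sorted_uniq_leq sort_uniq fset_uniq (sort_sorted leq_total).
Qed.

Lemma eq_prodF (S : Type) (op : S -> S -> option S) (A : {fset nat}) (g1 g2 : nat -> option S) :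
  g1 =1 g2 -> prodF op A g1 = prodF op A g2.
Proof. by move=> eq_g; rewrite /prodF (eq_map eq_g). Qed.

Section Blocks.
Variable H : nat -> {fset nat}.
Hypothesis H_neq0 : forall n, H n != fset0.
Hypothesis H_increasing : forall n i j, i \in H n -> j \in H n.+1 -> i < j.

Lemma ltn_blocks k k' i j : k < k' -> i \in H k -> j \in H k' -> i < j.
Proof.
elim: k' j => [//|k' IHk'] j; rewrite ltnS leq_eqVlt => /predU1P[-> | lt_kk'] iH jH.
  exact: H_increasing iH jH.
have /fset0Pn[x xH] := H_neq0 k'.
exact: ltn_trans (IHk' _ lt_kk' iH xH) (H_increasing xH jH).
Qed.

Lemma leq_block_index k i : i \in H k -> k <= i.
Proof.
elim: k i => [//|k IHk] i iH; have /fset0Pn[x xH] := H_neq0 k.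
exact: leq_ltn_trans (IHk _ xH) (H_increasing xH iH).
Qed.

Definition blocks (G : {fset nat}) : seq nat := flatten [seq fenum (H k) | k <- fenum G].

Definition block_union (G : {fset nat}) : {fset nat} := seq_fset tt (blocks G).

Lemma blocks_sorted G : sorted ltn (blocks G).
Proof.
have := fenum_sorted G; rewrite /blocks !(sorted_pairwise ltn_trans).
elim: (fenum G) => [//|k ks IHks] /= /andP[k_lt_ks ks_sorted].
rewrite pairwise_cat IHks // -(sorted_pairwise ltn_trans) fenum_sorted !andbT.
apply/allrelP => i j; rewrite mem_fenum => iH /flattenP[_ /mapP[k' k'ks ->]].
rewrite mem_fenum; apply: ltn_blocks iH.
exact: (allP k_lt_ks).
Qed.

Lemma fenum_block_union G : fenum (block_union G) = blocks G.
Proof.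
apply: (irr_sorted_eq ltn_trans ltnn (fenum_sorted _) (blocks_sorted G)) => x.
by rewrite mem_fenum seq_fsetE.
Qed.

Lemma prodF_block_union (S : Type) (op : S -> S -> option S) (g : nat -> option S) G :
  psg_assoc op ->
  prodF op G (fun k => prodF op (H k) g) = prodF op (block_union G) g.
Proof.
move=> opA; rewrite [RHS]/prodF -/(fenum _) fenum_block_union /blocks map_flatten.
rewrite plist_flatten //; first by rewrite -!map_comp.
rewrite -map_comp all_map; apply/allP => k _ /=.
by rewrite size_map /fenum size_sort lt0n cardfs_eq0 H_neq0.
Qed.

Lemma block_union_neq0 G : G != fset0 -> block_union G != fset0.
Proof.
move=> /fset0Pn[k kG]; have /fset0Pn[x xH] := H_neq0 k.
apply/fset0Pn; exists x; rewrite seq_fsetE; apply/flattenP.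
by exists (fenum (H k)); rewrite ?mem_fenum //; apply: map_f; rewrite mem_fenum.
Qed.

Lemma block_union_ge G m : (forall n, n \in G -> m <= n) ->
  forall n, n \in block_union G -> m <= n.
Proof.
move=> G_ge n; rewrite seq_fsetE => /flattenP[_ /mapP[k kG ->]].
rewrite !mem_fenum in kG * => nH.
exact: leq_trans (G_ge _ kG) (leq_block_index nH).
Qed.

Section BlockProducts.
Variables (S : Type) (op : S -> S -> option S).
Hypothesis opA : psg_assoc op.
Variable f : nat -> S.
Hypothesis f_adequate : adequate_seq op f.

(* The default [f 0] is never used: every block product of [f] is defined. *)
Definition block_prod (k : nat) : S := odflt (f 0) (prodF op (H k) (Some \o f)).

Lemma prodF_block k : prodF op (H k) (Some \o f) = Some (block_prod k).
Proof. by rewrite /block_prod; have [u ->] := f_adequate.1 _ (H_neq0 k). Qed.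

Lemma prodF_block_prod G :
  prodF op G (Some \o block_prod) = prodF op (block_union G) (Some \o f).
Proof.
by rewrite -prodF_block_union //; apply: eq_prodF => k; rewrite /= prodF_block.
Qed.

Lemma block_prod_adequate : adequate_seq op block_prod.
Proof.
split=> [G G_neq0 | K K_neq0].
  by rewrite prodF_block_prod; apply: f_adequate.1; apply: block_union_neq0.
have [m f_tail] := f_adequate.2 K K_neq0; exists m => G G_neq0 G_ge.
rewrite prodF_block_prod; apply: f_tail; first exact: block_union_neq0.
exact: block_union_ge.
Qed.

End BlockProducts.
End Blocks.

Theorem lemma3p2 (S : Type) (op : S -> S -> option S)
  (Hassoc : psg_assoc op) (Hcomm : psg_comm op) (Hadeq : adequate op)
  (A : S -> Prop) (HA : Jdelta op A)
  (F : seq (nat -> S)) (HFne : F <> [::])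
  (HF : forall f, List.In f F -> adequate_seq op f)
  (H : nat -> {fset nat}) (HHne : forall n, H n != fset0)
  (HHinc : forall n i j, i \in H n -> j \in H n.+1 -> i < j)
  (W : seq S) (HWne : W <> [::]) :
  exists a, sigma op W a /\
  exists G : {fset nat}, G != fset0 /\
    forall f, List.In f F ->
      exists p q,
        prodF op G (fun k => prodF op (H k) (fun t => Some (f t))) = Some p /\
        sigma op (opr op W a) p /\ op a p = Some q /\ A q.
Proof.
pose blockF := [seq block_prod H op f | f <- F].
have blockF_neq0 : blockF <> [::] by rewrite /blockF; case: F HFne {HF blockF}.
have blockF_adequate g : List.In g blockF -> adequate_seq op g.
  by case/List.in_map_iff => f [<- fF]; apply: block_prod_adequate => //; apply: HF.
have [a [Wa [G [G_neq0 G_prod]]]] := HA _ blockF_neq0 blockF_adequate W HWne.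
exists a; split=> //; exists G; split=> // f fF.
have [p [q [prod_p rest]]] := G_prod _ (List.in_map (block_prod H op) F f fF).
exists p, q; split=> //; rewrite -prod_p; apply: eq_prodF => k.
by rewrite /= (prodF_block HHne (HF f fF)).
Qed.
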